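(* Let $v=\sum_{\alpha\in\{0,1\}^n}f_\alpha\omega_\alpha\in\mathcal P^\omega_n$ with $f_\alpha\in\mathcal P_n$. Then $v\in\Lambda^\omega_n$ if and only if for every $i=1,\dots,n-1$ and every $\alpha\in\{0,1\}^n$: $$\partial_i(f_\alpha)=\begin{cases}0 & \alpha\notin J_i,\\ f_{s_i(\alpha)} & \alpha\in J_i.\end{cases}$$
   Context: Let $\mathcal P_n=\mathbb Q[x_1,\dots,x_n]$ and $\mathcal P^\omega_n=\mathcal P_n\otimes\bigwedge[\omega_1,\dots,\omega_n]$ ($\omega_i$ odd, commuting with the $x_j$). $S_n$ acts on $\mathcal P^\omega_n$ by ring automorphisms via $s_i(x_j)=x_{s_i(j)}$, $s_i(\omega_j)=\omega_j+\delta_{ij}(x_j-x_{j+1})\omega_{j+1}$; $\Lambda^\omega_n=(\mathcal P^\omega_n)^{S_n}$. On $\mathcal P_n$, $\partial_i=(1-s_i)/(x_i-x_{i+1})$ is the usual divided difference. For $\alpha\in\{0,1\}^n$, $\omega_\alpha=\omega_1^{\alpha_1}\cdots\omega_n^{\alpha_n}$; $s_i(\alpha)$ is $\alpha$ with entries $i,i+1$ swapped; $J_i=\{\alpha:\alpha_i=0,\alpha_{i+1}=1\}$. *)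

From HB Require Import structures.
From mathcomp Require Import all_boot all_order all_algebra.
Set Implicit Arguments. Unset Strict Implicit. Unset Printing Implicit Defensive.
Import Order.TTheory GRing.Theory Num.Theory.
Local Open Scope ring_scope.

(* ---------- P_n = Q[x_0, ..., x_{n-1}] as iterated univariate polynomials.
   MP n.+1 = {poly MP n}; the outermost indeterminate 'X is x_n (0-based). *)
Fixpoint MP (n : nat) : idomainType :=
  match n with
  | 0 => (rat : idomainType)
  | m.+1 => ({poly MP m} : idomainType)
  end.

Fixpoint var (n j : nat) : MP n :=
  match n return MP n with
  | 0 => 0
  | m.+1 => if (j < m)%N then (var m j)%:P
            else if j == m then 'X else 0
  end.

(* s_i on P_n: swaps x_i and x_{i+1} (0-based), as a ring automorphism. *)
Fixpoint sw (n : nat) (i : nat) : MP n -> MP n :=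
  match n return MP n -> MP n with
  | 0 => id
  | m.+1 => fun p =>
     if (i.+1 < m)%N then map_poly (@sw m i) p
     else if i.+1 == m then
       (match m return MP m.+1 -> MP m.+1 with
        | 0 => id
        | k.+1 => fun q => @swapXY (MP k) q
        end) p
     else p
  end.

(* "partial_i f = h" : the divided difference (f - s_i f)/(x_i - x_{i+1})
   equals h, i.e. (x_i - x_{i+1}) * h = f - s_i f (MP n is a domain). *)
Definition ddiff_is (n i : nat) (f h : MP n) : Prop :=
  (var n i - var n i.+1) * h = f - sw i f.

(* ---------- P^omega_n = P_n (x) /\[omega_0..omega_{n-1}].
   An element is sum_A f_A omega_A, A ranging over subsets of 'I_n
   (alpha in {0,1}^n <-> its support A), omega_A the increasing product. *)
Definition PW (n : nat) := {ffun {set 'I_n} -> MP n}.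

Definition pw_add n (u v : PW n) : PW n := [ffun A => u A + v A].
Definition pw_zero n : PW n := [ffun _ => 0].

(* sign of omega_A * omega_B = sgn * omega_(A u B), A,B disjoint *)
Definition pw_sgn n (A B : {set 'I_n}) : MP n :=
  (-1) ^+ #|[set p : 'I_n * 'I_n | (p.1 \in A) && (p.2 \in B) && (p.2 < p.1)%N]|.

Definition pw_mul n (u v : PW n) : PW n :=
  [ffun C => \sum_(A : {set 'I_n}) \sum_(B : {set 'I_n})
      if (A :|: B == C) && [disjoint A & B] then pw_sgn A B * u A * v B else 0].

Definition pw_const n (f : MP n) : PW n := [ffun A => if A == set0 then f else 0].
Definition pw_one n : PW n := pw_const 1.

(* the generator omega_k (0-based k; zero if k >= n, never used then) *)
Definition omega n (k : nat) : PW n :=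
  [ffun A => if (k < n)%N && (A == [set x : 'I_n | val x == k]) then 1 else 0].

Definition s_omega n (i j : nat) : PW n :=
  if j == i then pw_add (omega n j)
                        (pw_mul (pw_const (var n i - var n i.+1)) (omega n i.+1))
  else omega n j.

(* s_i on P^omega_n: the ring automorphism extending the above:
   s_i(sum_A f_A omega_A) = sum_A s_i(f_A) * prod_{j in A, increasing} s_i(omega_j) *)
Definition s_act n (i : nat) (v : PW n) : PW n :=
  \big[@pw_add n/pw_zero n]_(A : {set 'I_n})
     pw_mul (pw_const (sw i (v A)))
            (\big[@pw_mul n/pw_one n]_(j < n) (if j \in A then s_omega n i j else pw_one n)).

(* Lambda^omega_n: invariants of S_n, i.e. fixed by every generator s_i,
   i = 0, ..., n-2 (0-based) *)
Definition lambda_inv n (v : PW n) : Prop :=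
  forall i : nat, (i.+1 < n)%N -> s_act i v = v.

Definition swn (i k : nat) : nat := if k == i then i.+1 else if k == i.+1 then i else k.
Definition s_set n (i : nat) (A : {set 'I_n}) : {set 'I_n} :=
  [set x : 'I_n | [exists y in A, val x == swn i (val y)]].

Definition inJ n (i : nat) (A : {set 'I_n}) : bool :=
  ~~ [exists x in A, val x == i] && [exists x in A, val x == i.+1].

From HB Require Import structures.
From mathcomp Require Import all_boot all_order all_algebra.
From mathcomp Require Import zify.
Set Implicit Arguments. Unset Strict Implicit. Unset Printing Implicit Defensive.
Import GRing.Theory.
Local Open Scope ring_scope.

(* Of the generators, only omega_i is moved by s_i:
   s_i(omega_i) = omega_i + (x_i - x_{i+1}) omega_{i+1}.  Expanding the ordered
   product of the s_i(omega_j), j in A, thus gives omega_A plus, when i is in A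
   and i+1 is not, the term (x_i - x_{i+1}) omega_{s_i(A)}, without sign because
   omega_i and omega_{i+1} are adjacent in the order.  Hence the
   omega_B-coefficient of s_i(v) is
     s_i(f_B) + [B in J_i] (x_i - x_{i+1}) s_i(f_{s_i(B)}),
   and since s_i(B) is never in J_i when B is, s_i(v) = v amounts to the
   divided-difference identities at B and at s_i(B). *)

Section Monomials.
Variable n : nat.
Implicit Types (C D : {set 'I_n}) (a b : MP n) (u w : PW n).

Definition pw_mono C a : PW n := [ffun A => if A == C then a else 0].

Lemma pw_mono0 C : pw_mono C 0 = pw_zero n.
Proof. by apply/ffunP => A; rewrite !ffunE if_same. Qed.

Lemma pw_addr0 u : pw_add u (pw_zero n) = u.
Proof. by apply/ffunP => A; rewrite !ffunE addr0. Qed.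

Lemma pw_sum_coef (I : finType) (F : I -> PW n) A :
  (\big[@pw_add n/pw_zero n]_j F j) A = \sum_j F j A.
Proof. by apply: (big_morph (fun u : PW n => u A)) => [u w|]; rewrite ffunE. Qed.

Lemma pw_mulDl u u' w : pw_mul (pw_add u u') w = pw_add (pw_mul u w) (pw_mul u' w).
Proof.
apply/ffunP => E; rewrite !ffunE -big_split /=; apply: eq_bigr => A _.
rewrite -big_split /=; apply: eq_bigr => B _; rewrite ffunE.
by case: ifP; rewrite ?addr0 // mulrDr mulrDl.
Qed.

Lemma pw_mulDr u w w' : pw_mul u (pw_add w w') = pw_add (pw_mul u w) (pw_mul u w').
Proof.
apply/ffunP => E; rewrite !ffunE -big_split /=; apply: eq_bigr => A _.
rewrite -big_split /=; apply: eq_bigr => B _; rewrite ffunE.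
by case: ifP; rewrite ?addr0 // mulrDr.
Qed.

Lemma pw_mul_mono C D a b :
  pw_mul (pw_mono C a) (pw_mono D b) =
  pw_mono (C :|: D) (if [disjoint C & D] then pw_sgn C D * a * b else 0).
Proof.
apply/ffunP => E; rewrite !ffunE (bigD1 C) //= [X in _ + X]big1 ?addr0; last first.
  move=> A /negbTE AC; apply: big1 => B _.
  by rewrite !ffunE AC mulr0 mul0r if_same.
rewrite (bigD1 D) //= [X in _ + X]big1 ?addr0; last first.
  by move=> B /negbTE BD; rewrite !ffunE BD mulr0 if_same.
rewrite !ffunE !eqxx (eq_sym E).
by case: (C :|: D == E); case: [disjoint C & D].
Qed.

Lemma pw_sgn_sorted C D : {in C & D, forall x y : 'I_n, (x <= y)%N} -> pw_sgn C D = 1.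
Proof.
move=> CleD; rewrite /pw_sgn (_ : [set _ | _] = set0) ?cards0 ?expr0 //.
apply/setP => -[x y]; rewrite !inE /=; apply/negbTE/andP => -[/andP[Cx Dy]].
by rewrite ltnNge CleD.
Qed.

Lemma pw_mul_mono_sorted C D a b :
  [disjoint C & D] -> {in C & D, forall x y : 'I_n, (x <= y)%N} ->
  pw_mul (pw_mono C a) (pw_mono D b) = pw_mono (C :|: D) (a * b).
Proof. by move=> CD CleD; rewrite pw_mul_mono CD pw_sgn_sorted // mul1r. Qed.

Lemma pw_mul_mono0 D a b : pw_mul (pw_mono set0 a) (pw_mono D b) = pw_mono D (a * b).
Proof.
rewrite pw_mul_mono_sorted ?set0U // => [|x y]; last by rewrite inE.
by rewrite -setI_eq0 set0I.
Qed.

Lemma pw_mul_mono1_lt (x : 'I_n) D a b : {in D, forall y : 'I_n, (x < y)%N} ->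
  pw_mul (pw_mono [set x] a) (pw_mono D b) = pw_mono (x |: D) (a * b).
Proof.
move=> xltD; rewrite pw_mul_mono_sorted ?disjoints1.
- by [].
- by apply/negP => /xltD; rewrite ltnn.
- by move=> _ y /set1P -> /xltD /ltnW.
Qed.

Lemma pw_mul_mono1_mem (x : 'I_n) D a b : x \in D ->
  pw_mul (pw_mono [set x] a) (pw_mono D b) = pw_zero n.
Proof. by move=> Dx; rewrite pw_mul_mono disjoints1 Dx pw_mono0. Qed.

Lemma pw_const_mono f : pw_const f = pw_mono set0 f.
Proof. by []. Qed.

Lemma pw_one_mono : pw_one n = pw_mono set0 1.
Proof. by []. Qed.

Lemma omega_mono (x : 'I_n) : omega n x = pw_mono [set x] 1.
Proof.
apply/ffunP => A; rewrite !ffunE ltn_ord.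
by rewrite (_ : [set y | _] = [set x]) //; apply/setP => y; rewrite !inE val_eqE.
Qed.

End Monomials.

Section IndexSets.
Variable n : nat.
Implicit Types (C D : {set 'I_n}).

Definition mem_val C (j : nat) : bool := [exists x in C, val x == j].

Definition suffix C (k : nat) : {set 'I_n} := [set x in C | (k <= x)%N].

Definition descent (i : nat) C : bool := mem_val C i && ~~ mem_val C i.+1.

Lemma mem_valE C (x : 'I_n) : mem_val C x = (x \in C).
Proof.
apply/existsP/idP => [[y /andP[Cy /eqP/val_inj <-]] // | Cx].
by exists x; rewrite Cx eqxx.
Qed.

Lemma mem_val_ord C j (lt_jn : (j < n)%N) : mem_val C j = (Ordinal lt_jn \in C).
Proof. exact: mem_valE (Ordinal lt_jn). Qed.

Lemma mem_val_ge C j : (n <= j)%N -> mem_val C j = false.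
Proof.
move=> le_nj; apply/negbTE/existsP => -[y /andP[_ /eqP yj]].
by move: (ltn_ord y); rewrite yj ltnNge le_nj.
Qed.

Lemma eq_mem_val C D : mem_val C =1 mem_val D -> C = D.
Proof. by move=> CD; apply/setP => x; rewrite -!mem_valE CD. Qed.

Lemma mem_valU C D j : mem_val (C :|: D) j = mem_val C j || mem_val D j.
Proof.
case: (ltnP j n) => [lt_jn | le_nj]; last by rewrite !mem_val_ge.
by rewrite !(mem_val_ord _ lt_jn) inE.
Qed.

Lemma mem_val1 (x : 'I_n) j : mem_val [set x] j = (j == x).
Proof.
case: (ltnP j n) => [lt_jn | le_nj]; last first.
  by rewrite mem_val_ge //; have := ltn_ord x; case: eqP => //; lia.
by rewrite (mem_val_ord _ lt_jn) inE -val_eqE.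
Qed.

Lemma mem_val_suffix C k j : mem_val (suffix C k) j = mem_val C j && (k <= j)%N.
Proof.
case: (ltnP j n) => [lt_jn | le_nj]; last by rewrite !mem_val_ge.
by rewrite !(mem_val_ord _ lt_jn) inE.
Qed.

Lemma suffix_cons C (x : 'I_n) : x \in C -> x |: suffix C x.+1 = suffix C x.
Proof.
move=> Cx; apply: eq_mem_val => j; rewrite mem_valU mem_val1 !mem_val_suffix.
by case: (eqVneq j x) => [->|]; [rewrite mem_valE Cx leqnn | lia].
Qed.

Lemma swnK i : involutive (swn i).
Proof. by move=> k; rewrite /swn; repeat case: ifP; lia. Qed.

Lemma mem_val_s_set i C j :
  (i.+1 < n)%N -> mem_val (s_set i C) j = mem_val C (swn i j).
Proof.
move=> lt_i1n; case: (ltnP j n) => [lt_jn | le_nj]; last first.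
  by rewrite !mem_val_ge // /swn; repeat case: ifP; lia.
rewrite mem_val_ord inE; apply/existsP/existsP => -[y /andP[Cy /eqP e]].
  by exists y; move: e => /= ->; rewrite swnK Cy eqxx.
by exists y; rewrite Cy /= e swnK eqxx.
Qed.

Lemma s_setK i : (i.+1 < n)%N -> involutive (@s_set n i).
Proof. by move=> lt_i1n C; apply: eq_mem_val => j; rewrite !mem_val_s_set // swnK. Qed.

Lemma descent_s_set i C : (i.+1 < n)%N -> descent i (s_set i C) = inJ i C.
Proof.
move=> lt_i1n; rewrite /descent !mem_val_s_set // /swn eqxx (gtn_eqF (ltnSn i)) eqxx.
by rewrite andbC.
Qed.

Lemma inJ_s_set i C : (i.+1 < n)%N -> inJ i C -> inJ i (s_set i C) = false.
Proof.
move=> lt_i1n /andP[_ Ci1].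
by rewrite -descent_s_set // s_setK // /descent /mem_val Ci1 andbF.
Qed.

End IndexSets.

Section SwapAction.
Variables n i : nat.
Hypothesis lt_i1n : (i.+1 < n)%N.
Local Notation c := (var n i - var n i.+1).
Local Notation oi := (Ordinal (ltnW lt_i1n)).
Local Notation oi1 := (Ordinal lt_i1n).

Lemma s_omega_ord (x : 'I_n) : x != i :> nat -> s_omega n i x = pw_mono [set x] 1.
Proof. by move=> xi; rewrite /s_omega (negbTE xi) omega_mono. Qed.

Lemma s_omega_diag : s_omega n i i = pw_add (pw_mono [set oi] 1) (pw_mono [set oi1] c).
Proof.
rewrite /s_omega eqxx (omega_mono oi) (omega_mono oi1).
by rewrite pw_const_mono pw_mul_mono0 mulr1.
Qed.

Section Product.
Variable A : {set 'I_n}.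

Definition s_factor j : PW n := if mem_val A j then s_omega n i j else pw_one n.

Definition s_tail k : PW n :=
  pw_add (pw_mono (suffix A k) 1)
         (pw_mono (s_set i (suffix A k)) (if (k <= i)%N && descent i A then c else 0)).

Lemma s_tail_end k : (n <= k)%N -> s_tail k = pw_one n.
Proof.
move=> le_nk; rewrite /s_tail (_ : (k <= i)%N = false); last by lia.
rewrite pw_mono0 pw_addr0 (_ : suffix A k = set0) //.
by apply/setP => x; rewrite !inE; have := ltn_ord x; case: leqP; lia.
Qed.

Lemma s_tail_notin k : ~~ mem_val A k -> s_tail k.+1 = s_tail k.
Proof.
move=> Ak; rewrite /s_tail; have -> : suffix A k.+1 = suffix A k.
  apply: eq_mem_val => j; rewrite !mem_val_suffix.
  by case: (eqVneq j k) => [->|]; [rewrite (negbTE Ak) | lia].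
suff -> : (k.+1 <= i)%N && descent i A = (k <= i)%N && descent i A by [].
by case: (eqVneq k i) => [<-|]; [rewrite /descent (negbTE Ak) !andbF | lia].
Qed.

Lemma s_tail_in (x : 'I_n) : x \in A -> x != i :> nat ->
  pw_mul (pw_mono [set x] 1) (s_tail x.+1) = s_tail x.
Proof.
move=> Ax xi; rewrite /s_tail pw_mulDr pw_mul_mono1_lt => [|y]; last first.
  by rewrite inE => /andP[].
rewrite suffix_cons // mulr1 (_ : (x.+1 <= i)%N = (x <= i)%N); last by lia.
case: ifP => [/andP[le_xi _] | _]; last by rewrite pw_mul_mono mulr0 if_same !pw_mono0.
rewrite pw_mul_mono1_lt => [|y]; last first.
  rewrite -mem_valE mem_val_s_set // mem_val_suffix => /andP[_].
  by rewrite /swn; repeat case: ifP; lia.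
rewrite mul1r; congr (pw_add _ (pw_mono _ _)).
apply: eq_mem_val => j; rewrite mem_valU mem_val1 !mem_val_s_set // !mem_val_suffix.
case: (eqVneq j x) => [->|jx]; last by rewrite /swn; repeat case: ifP; lia.
by rewrite /swn; repeat case: ifP; rewrite ?mem_valE ?Ax; lia.
Qed.

Lemma s_tail_diag : mem_val A i -> pw_mul (s_omega n i i) (s_tail i.+1) = s_tail i.
Proof.
rewrite (mem_val_ord _ (ltnW lt_i1n)) => Aoi.
have -> : s_tail i.+1 = pw_mono (suffix A i.+1) 1.
  by rewrite /s_tail ltnn pw_mono0 pw_addr0.
rewrite s_omega_diag pw_mulDl pw_mul_mono1_lt => [|y]; last by rewrite inE => /andP[].
rewrite /s_tail suffix_cons // mulr1 leqnn /descent (mem_val_ord _ (ltnW lt_i1n)) Aoi.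
rewrite (mem_val_ord _ lt_i1n) /=; case: (boolP (oi1 \in A)) => [Aoi1 | nAoi1] /=.
  by rewrite pw_mul_mono1_mem ?pw_mono0 // inE Aoi1 /=.
rewrite pw_mul_mono1_lt => [|y]; last first.
  rewrite inE => /andP[Ay le_i1y]; rewrite ltn_neqAle le_i1y andbT.
  by apply: contraNneq nAoi1 => e; rewrite (_ : oi1 = y) //; apply: val_inj.
congr (pw_add _ (pw_mono _ _)); last by rewrite mulr1.
apply: eq_mem_val => j; rewrite mem_valU mem_val1 mem_val_s_set // !mem_val_suffix.
rewrite -(mem_valE _ oi) -(mem_valE _ oi1) /= in Aoi nAoi1.
rewrite /swn /=; case: (eqVneq j i) => [->|ji].
  by rewrite (negbTE nAoi1); lia.
case: (eqVneq j i.+1) => [->|ji1]; first by rewrite Aoi orTb leqnn.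
lia.
Qed.

Lemma s_factor_step k : pw_mul (s_factor k) (s_tail k.+1) = s_tail k.
Proof.
rewrite /s_factor; case: ifPn => [/existsP[x /andP[Ax /eqP /= <-]] | Ak]; last first.
  by rewrite s_tail_notin // pw_one_mono /s_tail pw_mulDr !pw_mul_mono0 !mul1r.
have [xi | xi] := eqVneq (x : nat) i; first by rewrite xi s_tail_diag // -xi mem_valE.
by rewrite s_omega_ord // s_tail_in.
Qed.

Lemma s_tail_prod k : \big[@pw_mul n/pw_one n]_(k <= j < n) s_factor j = s_tail k.
Proof.
move Ed : (n - k)%N => d; elim: d k Ed => [|d IHd] k Ed.
  by rewrite big_geq ?s_tail_end //; lia.
by rewrite big_ltn ?IHd ?s_factor_step //; lia.
Qed.

Lemma prod_s_omega :
  \big[@pw_mul n/pw_one n]_(j < n) (if j \in A then s_omega n i j else pw_one n) =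
  pw_add (pw_mono A 1) (pw_mono (s_set i A) (if descent i A then c else 0)).
Proof.
rewrite (eq_bigr (fun j : 'I_n => s_factor j)) => [|j _]; last by rewrite /s_factor mem_valE.
rewrite -(big_mkord xpredT s_factor) s_tail_prod /s_tail.
by rewrite (_ : suffix A 0 = A) //; apply/setP => x; rewrite inE andbT.
Qed.

End Product.

Lemma s_act_coef (v : PW n) B :
  s_act i v B = sw i (v B) + (if inJ i B then sw i (v (s_set i B)) * c else 0).
Proof.
rewrite /s_act pw_sum_coef.
under eq_bigr => A _ do rewrite prod_s_omega pw_const_mono pw_mulDr !pw_mul_mono0 !ffunE.
rewrite big_split -!big_mkcond /= (big_pred1 B) => [|A]; last by rewrite eq_sym.
rewrite (big_pred1 (s_set i B)) => [|A]; last by rewrite eq_sym (inv_eq (s_setK lt_i1n)).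
by rewrite descent_s_set // mulr1; case: inJ; rewrite ?mulr0.
Qed.

Lemma s_act_fixedP (v : PW n) :
  s_act i v = v <-> forall A, ddiff_is i (v A) (if inJ i A then v (s_set i A) else 0).
Proof.
rewrite /ddiff_is; split => [fix_v B | ddiff_v].
  have /esym vB := congr1 (fun u : PW n => u B) fix_v; rewrite /= s_act_coef in vB.
  case: ifPn => JB in vB *; last by rewrite mulr0 {1}vB addr0 subrr.
  have := congr1 (fun u : PW n => u (s_set i B)) fix_v.
  rewrite /= s_act_coef inJ_s_set // addr0 => sw_vsB.
  by rewrite {1}vB sw_vsB addrAC subrr add0r mulrC.
apply/ffunP => B; rewrite s_act_coef; have := ddiff_v B.
case: ifPn => JB; last by rewrite mulr0 addr0 => /eqP; rewrite eq_sym subr_eq0 => /eqP.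
have := ddiff_v (s_set i B); rewrite inJ_s_set // mulr0 => /eqP.
by rewrite eq_sym subr_eq0 => /eqP <-; rewrite mulrC => ->; rewrite addrC subrK.
Qed.

End SwapAction.

Theorem proposition3p2 (n : nat) (v : PW n) :
  lambda_inv v <->
  (forall i : nat, (i.+1 < n)%N -> forall A : {set 'I_n},
     ddiff_is i (v A) (if inJ i A then v (s_set i A) else 0)).
Proof.
split => [inv_v i lt_i1n | ddiff_v i lt_i1n].
  exact: (s_act_fixedP lt_i1n v).1 (inv_v i lt_i1n).
exact: (s_act_fixedP lt_i1n v).2 (ddiff_v i lt_i1n).
Qed.
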